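(* For every fan $F$ there is a homomorphism $c:F\to T_7$ such that $c(r(F))=0$, $c(fl(F))\neq 0$ and $c(ll(F))\neq 0$.
   Context: $T_7$ is the tournament with vertex set $\{0,1,\dots,6\}$ in which $(i,j)$ is an arc if and only if $j-i\equiv 1,2,$ or $4 \pmod 7$. A homomorphism $c:F\to T_7$ of an oriented graph $F$ is a map on vertices such that $(c(u),c(v))$ is an arc of $T_7$ whenever $(u,v)$ is an arc of $F$. A fan $F$ is an oriented planar graph consisting of an oriented rooted plane tree (children of each vertex linearly ordered, as given by the planar embedding) with root $r=r(F)$, whose leaves (the vertices other than the root with no children), listed in left-to-right order, are $x_1,\dots,x_m$ ($m\ge 1$), together with, for each $1\le i\le m-1$, one arc between $x_i$ and $x_{i+1}$ (either $(x_i,x_{i+1})$ or $(x_{i+1},x_i)$). Write $fl(F)=x_1$ and $ll(F)=x_m$. *)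

From mathcomp Require Import all_boot.
Set Implicit Arguments. Unset Strict Implicit. Unset Printing Implicit Defensive.

Definition T7arc (i j : 'I_7) : bool := ((j + 7 - i) %% 7) \in [:: 1; 2; 4].

(* Oriented rooted plane trees: a node is the ordered (left-to-right) list of
   its children; each child comes with the orientation of the tree edge
   joining it to its parent: true = (parent, child), false = (child, parent). *)
Inductive ptree : Type := Node of seq (bool * ptree).

(* Vertices are addressed by paths from the root: [::] is the root, and
   i :: p is vertex p inside the i-th child subtree (children numbered from 0). *)
Definition vertex := seq nat.

Fixpoint tree_arcs (t : ptree) : seq (vertex * vertex) :=
  let: Node cs := t in
  (fix go (i : nat) (cs : seq (bool * ptree)) : seq (vertex * vertex) :=
     match cs with
     | [::] => [::]
     | (o, t') :: cs' =>
         (if o then ([::], [:: i]) else ([:: i], [::]))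
           :: map (fun e => (i :: e.1, i :: e.2)) (tree_arcs t')
           ++ go i.+1 cs'
     end) 0 cs.

Fixpoint sub_leaves (t : ptree) : seq vertex :=
  let: Node cs := t in
  match cs with
  | [::] => [:: [::]]
  | _ =>
    (fix go (i : nat) (cs : seq (bool * ptree)) : seq vertex :=
       match cs with
       | [::] => [::]
       | (_, t') :: cs' => map (cons i) (sub_leaves t') ++ go i.+1 cs'
       end) 0 cs
  end.

(* A fan: an oriented rooted plane tree whose root has at least one child
   (so that m >= 1 and the root is not a leaf), together with, for each
   1 <= i <= m-1, the orientation of the arc between x_i and x_(i+1):
   true = (x_i, x_(i+1)), false = (x_(i+1), x_i). *)
Record fan := Fan {
  fan_tree : ptree;
  fan_path : seq bool;
  fan_root_nonleaf : let: Node cs := fan_tree in 0 < size cs;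
  fan_path_size : size fan_path = (size (sub_leaves fan_tree)).-1 }.

Definition leaves (F : fan) : seq vertex := sub_leaves (fan_tree F).

Definition fan_root (F : fan) : vertex := [::].
Definition fl (F : fan) : vertex := head [::] (leaves F).
Definition ll (F : fan) : vertex := last [::] (leaves F).

Definition path_arcs (F : fan) : seq (vertex * vertex) :=
  [seq (let x := nth [::] (leaves F) i in
        let y := nth [::] (leaves F) i.+1 in
        if nth true (fan_path F) i then (x, y) else (y, x))
  | i <- iota 0 (size (fan_path F))].

Definition fan_arcs (F : fan) : seq (vertex * vertex) :=
  tree_arcs (fan_tree F) ++ path_arcs F.

(* c is a homomorphism F -> T_7 (c is given on all addresses; only its values
   on vertices of F matter). *)
Definition is_hom (F : fan) (c : vertex -> 'I_7) : Prop :=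
  forall e, e \in fan_arcs F -> T7arc (c e.1) (c e.2).

From mathcomp Require Import all_boot zify.
Set Implicit Arguments. Unset Strict Implicit. Unset Printing Implicit Defensive.

(* x |-> a x + b with a in {1, 2, 4} preserves T_7 because {1, 2, 4} is the
   set of nonzero squares mod 7.  Each child subtree of the root is coloured
   recursively with its own root at 0 and then moved by such a map, chosen by
   exhaustive search so that the edge to the root points the right way, the
   extreme leaves of the subtree are nonzero, and its first leaf is joined
   correctly to the last leaf of the previous subtree.  Going from left to
   right this colours the whole fan. *)

Definition ord7 (n : nat) : 'I_7 := Ordinal (ltn_pmod n (isT : 0 < 7)).

Lemma ord7_val (x : 'I_7) : ord7 x = x.
Proof. by apply: val_inj; rewrite /= modn_small. Qed.

(* Unlike [forall x, P x], these reduce under vm_compute: enumerating 'I_7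
   through insub gets stuck on the opaque proof idP. *)
Definition all7 (P : pred 'I_7) : bool := all (P \o ord7) (iota 0 7).
Definition has7 (P : pred 'I_7) : bool := has (P \o ord7) (iota 0 7).

Lemma all7P (P : pred 'I_7) : reflect (forall x, P x) (all7 P).
Proof.
rewrite /all7; apply: (iffP allP) => [P_all x | P_all n _]; last exact: P_all.
by move: (P_all x); rewrite mem_iota /= ord7_val; apply.
Qed.

Lemma has7P (P : pred 'I_7) : reflect (exists x, P x) (has7 P).
Proof.
rewrite /has7; apply: (iffP hasP) => [[n _ Pn] | [x Px]]; first by exists (ord7 n).
by exists (val x); rewrite ?mem_iota //= ord7_val.
Qed.

Definition oarc (o : bool) (x y : 'I_7) : bool :=
  if o then T7arc x y else T7arc y x.

Definition T7endo (s : 'I_7 -> 'I_7) : Prop :=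
  forall x y, T7arc x y -> T7arc (s x) (s y).

Definition aff (a b x : 'I_7) : 'I_7 := ord7 (a * x + b).

Definition qr7 (a : 'I_7) : bool := val a \in [:: 1; 2; 4].

Lemma T7endo_aff a b : qr7 a -> T7endo (aff a b).
Proof.
have /all7P aff_hom : all7 (fun a => qr7 a ==> all7 (fun b => all7 (fun x =>
  all7 (fun y => T7arc x y ==> T7arc (aff a b x) (aff a b y))))).
  by vm_compute.
move=> /(implyP (aff_hom a)) /all7P /(_ b) /all7P aff_ab x y.
by move: (aff_ab x) => /all7P /(_ y) /implyP.
Qed.

Lemma T7endo_oarc s o x y : T7endo s -> oarc o x y -> oarc o (s x) (s y).
Proof. by case: o => s_endo; apply: s_endo. Qed.

Lemma T7endo_adjust o d (u f g : 'I_7) : u != ord0 ->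
  exists2 s, T7endo s &
    [/\ oarc o ord0 (s ord0), s f != ord0, s g != ord0 & oarc d u (s f)].
Proof.
have search : all (fun o => all (fun d => all7 (fun u => (u != ord0) ==>
  all7 (fun f => all7 (fun g => has7 (fun a => qr7 a && has7 (fun b =>
    [&& oarc o ord0 (aff a b ord0), aff a b f != ord0, aff a b g != ord0
      & oarc d u (aff a b f)]))))))
  [:: true; false]) [:: true; false].
  by vm_compute.
have bool_in (b : bool) : b \in [:: true; false] by case: b.
move: search => /allP /(_ o (bool_in o)) /allP /(_ d (bool_in d)) /all7P /(_ u).
move=> /implyP search /search /all7P /(_ f) /all7P /(_ g) /has7P [a /andP [qr_a]].
move=> /has7P [b /and4P [? ? ? ?]].
by exists (aff a b); first exact: T7endo_aff qr_a.
Qed.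

Fixpoint forest_arcs (i : nat) (cs : seq (bool * ptree)) : seq (vertex * vertex) :=
  if cs is (o, t) :: cs' then
    (if o then ([::], [:: i]) else ([:: i], [::]))
      :: map (fun e => (i :: e.1, i :: e.2)) (tree_arcs t) ++ forest_arcs i.+1 cs'
  else [::].

Fixpoint forest_leaves (i : nat) (cs : seq (bool * ptree)) : seq vertex :=
  if cs is (_, t) :: cs' then map (cons i) (sub_leaves t) ++ forest_leaves i.+1 cs'
  else [::].

Lemma sub_leaves_Node cs :
  sub_leaves (Node cs) = if cs is [::] then [:: [::]] else forest_leaves 0 cs.
Proof. by case: cs. Qed.

Definition all_children (P : ptree -> Prop) (cs : seq (bool * ptree)) : Prop :=
  foldr (fun oc acc => P oc.2 /\ acc) True cs.

Lemma all_childrenT (P : ptree -> Prop) cs : (forall t, P t) -> all_children P cs.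
Proof. by move=> P_all; elim: cs => //= oc cs ->. Qed.

Fixpoint ptree_nested_ind (P : ptree -> Prop)
    (IH : forall cs, all_children P cs -> P (Node cs)) (t : ptree) : P t :=
  let: Node cs := t in
  IH cs ((fix children cs : all_children P cs :=
            if cs is (_, t') :: cs' then conj (ptree_nested_ind IH t') (children cs')
            else I) cs).

Lemma sub_leaves_neq0 t : sub_leaves t != [::].
Proof.
elim/ptree_nested_ind: t => -[|[o t] cs]; first by [].
move=> [leaves_t _]; rewrite sub_leaves_Node /=.
by case: (sub_leaves t) leaves_t.
Qed.

Definition addr_ge (i : nat) (v : vertex) : bool :=
  if v is j :: _ then i <= j else true.

Lemma addr_geS i v : addr_ge i.+1 v -> addr_ge i v.
Proof. by case: v => //= j _ /ltnW. Qed.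

Lemma forest_arcs_ge i cs e : e \in forest_arcs i cs -> addr_ge i e.1 && addr_ge i e.2.
Proof.
elim: cs i => [|[o t] cs IH] i; first by rewrite in_nil.
rewrite [forest_arcs _ _]/= inE mem_cat.
case/or3P => [/eqP -> | /mapP [e' _ ->] | /IH /andP [ge1 ge2]].
- by case: o; rewrite /= leqnn.
- by rewrite /= leqnn.
- by rewrite (addr_geS ge1) (addr_geS ge2).
Qed.

Lemma forest_leaves_ge i cs v : v \in forest_leaves i cs -> addr_ge i v.
Proof.
elim: cs i => [|[o t] cs IH] i; first by rewrite in_nil.
rewrite [forest_leaves _ _]/= mem_cat => /orP [/mapP [v' _ ->] | /IH /addr_geS //].
exact: leqnn.
Qed.

Definition graft (i : nat) (c1 c2 : vertex -> 'I_7) (v : vertex) : 'I_7 :=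
  if v is j :: q then (if j == i then c1 q else c2 v) else c2 v.

Lemma graft_cons i c1 c2 q : graft i c1 c2 (i :: q) = c1 q.
Proof. by rewrite /= eqxx. Qed.

Lemma graft_ge i c1 c2 v : addr_ge i.+1 v -> graft i c1 c2 v = c2 v.
Proof. by case: v => //= j q /gtn_eqF ->. Qed.

Definition hom_on (s : seq (vertex * vertex)) (c : vertex -> 'I_7) : Prop :=
  {in s, forall e, T7arc (c e.1) (c e.2)}.

Definition path_hom (L : seq vertex) (p : seq bool) (c : vertex -> 'I_7) : Prop :=
  forall j, j < size p -> oarc (nth true p j) (c (nth [::] L j)) (c (nth [::] L j.+1)).

Lemma hom_on_endo s c f : T7endo f -> hom_on s c -> hom_on s (f \o c).
Proof. by move=> f_endo c_hom e /c_hom /f_endo. Qed.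

Lemma path_hom_endo L p c f : T7endo f -> path_hom L p c -> path_hom L p (f \o c).
Proof. by move=> f_endo c_hom j /c_hom /(T7endo_oarc f_endo). Qed.

Lemma path_hom_eq_in L p c c' : size p = (size L).-1 -> {in L, c =1 c'} ->
  path_hom L p c -> path_hom L p c'.
Proof.
move=> sz_p eq_c c_hom j lt_j; have lt_j1 : j.+1 < size L by lia.
by rewrite -!eq_c ?mem_nth ?(ltnW lt_j1) //; apply: c_hom.
Qed.

Lemma path_hom_map f L p c : size p = (size L).-1 ->
  path_hom L p (c \o f) -> path_hom (map f L) p c.
Proof.
move=> sz_p c_hom j lt_j; have lt_j1 : j.+1 < size L by lia.
by rewrite !(nth_map [::]) ?(ltnW lt_j1) //; apply: c_hom.
Qed.

Lemma path_hom_cat A B p c : A != [::] -> size p = (size (A ++ B)).-1 ->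
  path_hom A (take (size A).-1 p) c ->
  oarc (nth true p (size A).-1) (c (last [::] A)) (c (head [::] B)) ->
  path_hom B (drop (size A) p) c -> path_hom (A ++ B) p c.
Proof.
move=> nzA sz_p hom_A hom_AB hom_B j lt_j.
have pos_A : 0 < size A by rewrite lt0n size_eq0.
rewrite size_cat in sz_p.
case: (ltngtP j (size A).-1) => [lt_jA | lt_Aj | ->].
- have [lt_j1 lt_j2] : j < size A /\ j.+1 < size A by lia.
  rewrite !nth_cat lt_j1 lt_j2.
  by move: (hom_A j); rewrite nth_take // size_takel; [apply | lia].
- have [le_j1 le_j2] : size A <= j /\ size A <= j.+1 by lia.
  rewrite !nth_cat ltnNge le_j1 ltnNge le_j2 /= subSn //.
  by move: (hom_B (j - size A)); rewrite nth_drop subnKC // size_drop; apply; lia.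
- have [lt_j1 le_j2] : (size A).-1 < size A /\ size A <= (size A).-1.+1 by lia.
  rewrite !nth_cat lt_j1 ltnNge le_j2 /= nth_last prednK // subnn nth0.
  exact: hom_AB.
Qed.

Lemma hom_on_graft i o t cs c1 c2 : oarc o (c2 [::]) (c1 [::]) ->
  hom_on (tree_arcs t) c1 -> hom_on (forest_arcs i.+1 cs) c2 ->
  hom_on (forest_arcs i ((o, t) :: cs)) (graft i c1 c2).
Proof.
move=> root_arc hom_1 hom_2 e.
rewrite [forest_arcs _ _]/= inE mem_cat => /or3P [/eqP -> | /mapP [e' e'_in ->] | e_in].
- by case: o root_arc; rewrite /= eqxx.
- by rewrite /= !eqxx; apply: hom_1.
- have /andP [ge1 ge2] := forest_arcs_ge e_in.
  by rewrite !graft_ge //; apply: hom_2.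
Qed.

Definition colorable (t : ptree) : Prop :=
  forall p, size p = (size (sub_leaves t)).-1 ->
  exists c : vertex -> 'I_7,
    [/\ c [::] = ord0, hom_on (tree_arcs t) c & path_hom (sub_leaves t) p c].

Definition nonzero_ends (L : seq vertex) (c : vertex -> 'I_7) : bool :=
  (c (head [::] L) != ord0) && (c (last [::] L) != ord0).

Lemma colorable_adjust t o d u p : colorable t -> u != ord0 ->
  size p = (size (sub_leaves t)).-1 ->
  exists c : vertex -> 'I_7,
    [/\ oarc o ord0 (c [::]), hom_on (tree_arcs t) c, path_hom (sub_leaves t) p c,
        nonzero_ends (sub_leaves t) c & oarc d u (c (head [::] (sub_leaves t)))].
Proof.
move=> col_t nz_u /col_t [c [c_root hom_t hom_p]].
have [s s_endo [s_root s_first s_last s_arc]] :=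
  T7endo_adjust o d (c (head [::] (sub_leaves t))) (c (last [::] (sub_leaves t))) nz_u.
exists (s \o c); split; rewrite /= ?c_root ?s_first //.
- exact: hom_on_endo.
- exact: path_hom_endo.
- exact/andP.
Qed.

Lemma forest_leaves_ends_ge i cs :
  addr_ge i (head [::] (forest_leaves i cs)) &&
  addr_ge i (last [::] (forest_leaves i cs)).
Proof.
case: (forest_leaves i cs) (@forest_leaves_ge i cs) => [|v L] //= leaves_ge.
by rewrite !leaves_ge ?mem_head ?mem_last.
Qed.

Lemma last_cat_nonnil (T : eqType) (x0 : T) s1 s2 :
  s2 != [::] -> last x0 (s1 ++ s2) = last x0 s2.
Proof. by case: s2 => // y s2 _; rewrite last_cat. Qed.

Lemma path_hom_graft_first i L p c1 c2 : size p = (size L).-1 ->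
  path_hom L p c1 -> path_hom (map (cons i) L) p (graft i c1 c2).
Proof.
move=> sz_p path_1; apply: (path_hom_map sz_p).
by apply: (path_hom_eq_in sz_p _ path_1) => v _; rewrite /= eqxx.
Qed.

(* (d, u) are the orientation of the fan-path arc into the first leaf and the
   colour of the leaf it comes from; for the leftmost subtree they are dummies. *)
Lemma forest_coloring o t cs i p d u :
  colorable t -> all_children colorable cs -> u != ord0 ->
  size p = (size (forest_leaves i ((o, t) :: cs))).-1 ->
  exists c : vertex -> 'I_7,
    [/\ c [::] = ord0, hom_on (forest_arcs i ((o, t) :: cs)) c,
        path_hom (forest_leaves i ((o, t) :: cs)) p c,
        nonzero_ends (forest_leaves i ((o, t) :: cs)) c &
        oarc d u (c (head [::] (forest_leaves i ((o, t) :: cs))))].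
Proof.
elim: cs o t i p d u => [|[o' t'] cs IH] o t i p d u col_t col_cs nz_u sz_p.
all: have [x [L L_eq]] : exists x L, sub_leaves t = x :: L
       by case: (sub_leaves t) (sub_leaves_neq0 t) => // x L _; exists x, L.
all: rewrite [forest_leaves _ _]/= size_cat size_map L_eq addSn /= in sz_p.
- have sz_p1 : size p = (size (sub_leaves t)).-1 by rewrite L_eq sz_p addn0.
  have [c1 [root_1 hom_1 path_1 ends_1 arc_1]] := colorable_adjust o d col_t nz_u sz_p1.
  exists (graft i c1 (fun=> ord0)); rewrite [forest_leaves _ _]/= cats0; split => //.
  + by apply: hom_on_graft => // e; rewrite in_nil.
  + exact: path_hom_graft_first.
  + by move: ends_1; rewrite L_eq /nonzero_ends /= last_map /= !eqxx.
  + by move: arc_1; rewrite L_eq /= eqxx.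
case: col_cs => col_t' col_cs.
set R := forest_leaves i.+1 ((o', t') :: cs) in sz_p *.
have R_nz : R != [::].
  by rewrite /R [forest_leaves _ _]/=; case: (sub_leaves t') (sub_leaves_neq0 t').
have sz_p1 : size (take (size (sub_leaves t)).-1 p) = (size (sub_leaves t)).-1.
  by rewrite size_takel // L_eq sz_p leq_addr.
have [c1 [root_1 hom_1 path_1 ends_1 arc_1]] := colorable_adjust o d col_t nz_u sz_p1.
have /andP [_ nz_last] := ends_1.
have sz_p2 : size (drop (size (sub_leaves t)) p) = (size R).-1.
  by rewrite size_drop L_eq sz_p subnS addKn.
have [c2 [root_2 hom_2 path_2 ends_2 arc_2]] :=
  IH o' t' i.+1 _ (nth true p (size (sub_leaves t)).-1) _ col_t' col_cs nz_last sz_p2.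
have c2_R : {in R, c2 =1 graft i c1 c2}.
  by move=> v /forest_leaves_ge /graft_ge ->.
have /andP [head_ge last_ge] := forest_leaves_ends_ge i.+1 ((o', t') :: cs).
exists (graft i c1 c2).
rewrite (_ : forest_leaves _ _ = map (cons i) (sub_leaves t) ++ R) //; split => //.
- by apply: hom_on_graft; rewrite ?root_2.
- apply: path_hom_cat; rewrite ?size_map.
  + by rewrite L_eq.
  + by rewrite size_cat size_map L_eq sz_p addSn.
  + exact: path_hom_graft_first.
  + by move: arc_2; rewrite L_eq /= last_map /= eqxx (graft_ge _ _ head_ge).
  + exact: path_hom_eq_in sz_p2 c2_R path_2.
- rewrite /nonzero_ends last_cat_nonnil // (graft_ge _ _ last_ge) L_eq /= eqxx.
  rewrite L_eq in ends_1.
  by apply/andP; split; [case/andP: ends_1 | case/andP: ends_2].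
- by move: arc_1; rewrite L_eq /= eqxx.
Qed.

Lemma colorable_all t : colorable t.
Proof.
elim/ptree_nested_ind: t => -[|[o t] cs] col_cs p sz_p.
- by exists (fun=> ord0); split => // j; rewrite sz_p.
- case: col_cs => col_t col_cs.
  have [c [c_root hom_c path_c _ _]] :=
    forest_coloring (o := o) (i := 0) true col_t col_cs
      (isT : ord_max != ord0 :> 'I_7) sz_p.
  by exists c.
Qed.

Lemma is_hom_of F c : hom_on (tree_arcs (fan_tree F)) c ->
  path_hom (leaves F) (fan_path F) c -> is_hom F c.
Proof.
move=> hom_t hom_p e; rewrite mem_cat => /orP [/hom_t // | /mapP [j]].
rewrite mem_iota => /andP [_ lt_j] ->.
by move: (hom_p j lt_j); case: nth.
Qed.

Theorem lemma4 (F : fan) :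
  exists c : vertex -> 'I_7,
    [/\ is_hom F c, val (c (fan_root F)) = 0,
        val (c (fl F)) <> 0 & val (c (ll F)) <> 0].
Proof.
case: F => -[[|[o t] cs]] p nonleaf sz_p //.
have [c [c_root hom_c path_c /andP [nz_first nz_last] _]] :=
  forest_coloring (o := o) (i := 0) true (@colorable_all t)
    (all_childrenT cs (@colorable_all)) (isT : ord_max != ord0 :> 'I_7) sz_p.
exists c; split; rewrite /fan_root /fl /ll /leaves /= ?c_root //.
- exact: is_hom_of.
- by move=> first0; move/eqP: nz_first; apply; apply: val_inj.
- by move=> last0; move/eqP: nz_last; apply; apply: val_inj.
Qed.
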